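(* Let $\mathfrak{R}$ be a complete rewriting system on $\Sigma$ that is cyclically terminating. If there are no rules in $\mathfrak{R}$ with cyclical overlaps or cyclical inclusions, then $\mathfrak{R}$ is cyclically confluent.
   Context: $\Sigma^*$ is the free monoid on $\Sigma$; a rewriting system is a set of rules $l\to r$ with $l,r\in\Sigma^*$, complete meaning terminating and confluent; $plq\to prq$ is one rewriting step. $u\simeq v$ means $u=ab$, $v=ba$ for some words $a,b$ (cyclic conjugates). $u\rightsquigarrow v$ means some cyclic conjugate $\tilde u$ of $u$ (possibly $u$) satisfies $\tilde u\to v$; $\rightsquigarrow^*$ is its reflexive–transitive closure. $\mathfrak{R}$ is cyclically terminating if there is no infinite sequence $u_1\rightsquigarrow u_2\rightsquigarrow\cdots$, and cyclically confluent if whenever $w\rightsquigarrow^* u$ and $w\rightsquigarrow^* v$ there exist $z\simeq z'$ with $u\rightsquigarrow^* z$ and $v\rightsquigarrow^* z'$. There is a cyclical overlap between two rules if they have the form $xuy\to u'$ and $yvx\to v'$ with $u',v'$ words, $u,v,x,y$ non-empty words, and $u'v$, $v'u$ not cyclic conjugates. There is a cyclical inclusion between rules $l\to v$ and $l'\to v'$ if either $l'\simeq l$ and $v,v'$ are not cyclic conjugates, or $l'$ is a proper subword of a cyclic conjugate $\ell_1$ of $l$, written $\ell_1=ul'$ with $u$ non-empty, and $v$ and $uv'$ are not cyclic conjugates. *)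

From Stdlib Require Import List Relations.
Import ListNotations.
Set Implicit Arguments.

Section Rewriting.
Variable Sigma : Type.

Definition word := list Sigma.

Definition rws := word -> word -> Prop.

Definition step (R : rws) (u v : word) : Prop :=
  exists p q l r, R l r /\ u = p ++ l ++ q /\ v = p ++ r ++ q.

Definition rewrites (R : rws) : word -> word -> Prop := clos_refl_trans _ (step R).

Definition terminating (R : rws) : Prop :=
  ~ exists f : nat -> word, forall n, step R (f n) (f (S n)).

Definition confluent (R : rws) : Prop :=
  forall w u v, rewrites R w u -> rewrites R w v ->
    exists z, rewrites R u z /\ rewrites R v z.

Definition complete (R : rws) : Prop := terminating R /\ confluent R.

Definition cconj (u v : word) : Prop :=
  exists a b, u = a ++ b /\ v = b ++ a.

Definition cstep (R : rws) (u v : word) : Prop :=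
  exists u', cconj u u' /\ step R u' v.

Definition crewrites (R : rws) : word -> word -> Prop := clos_refl_trans _ (cstep R).

Definition cyclically_terminating (R : rws) : Prop :=
  ~ exists f : nat -> word, forall n, cstep R (f n) (f (S n)).

Definition cyclically_confluent (R : rws) : Prop :=
  forall w u v, crewrites R w u -> crewrites R w v ->
    exists z z', cconj z z' /\ crewrites R u z /\ crewrites R v z'.

Definition cyclical_overlap (l1 r1 l2 r2 : word) : Prop :=
  exists x u y v, x <> [] /\ u <> [] /\ y <> [] /\ v <> [] /\
    l1 = x ++ u ++ y /\ l2 = y ++ v ++ x /\ ~ cconj (r1 ++ v) (r2 ++ u).

Definition cyclical_inclusion (l v l' v' : word) : Prop :=
  (cconj l' l /\ ~ cconj v v') \/
  (exists l1 u, cconj l l1 /\ l1 = u ++ l' /\ u <> [] /\ ~ cconj v (u ++ v')).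

End Rewriting.

(* Cyclic termination makes the cyclic step relation well founded, so by Newman's
   lemma taken modulo cyclic conjugacy it suffices to join two cyclic steps out of
   one word.  Rotating, both redexes sit on a common circular word.  If one of them
   lies inside a linear reading of the circle, ordinary confluence joins the two
   results.  Otherwise the redexes wrap around each other: they then form a cyclical
   overlap or a cyclical inclusion, and excluding these says exactly that the two
   results are already conjugate. *)

From Stdlib Require Import List Relations Classical ClassicalEpsilon.
Import ListNotations.
Set Implicit Arguments.
Unset Strict Implicit.

Section NoInfiniteChain.
Variables (A : Type) (red : relation A).

Lemma no_infinite_chain_Acc :
  ~ (exists f : nat -> A, forall n, red (f n) (f (S n))) -> forall x, Acc (transp A red) x.
Proof.
  intros Hchain x0. apply NNPP. intro Hx0.
  set (P := fun x => ~ Acc (transp A red) x).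
  assert (Hnext : forall x, P x -> exists y, red x y /\ P y).
  { intros x Hx. apply NNPP. intro Hno. apply Hx. constructor. intros y Hy.
    apply NNPP. intro Hy'. apply Hno. now exists y. }
  assert (next : forall s : {x | P x}, {y | red (proj1_sig s) y /\ P y}).
  { intros [x Hx]. apply constructive_indefinite_description. now apply Hnext. }
  set (g := fun s => exist P (proj1_sig (next s)) (proj2 (proj2_sig (next s)))).
  apply Hchain. exists (fun n => proj1_sig (Nat.iter n g (exist P x0 Hx0))).
  intro n. exact (proj1 (proj2_sig (next _))).
Qed.

End NoInfiniteChain.

Section NewmanModulo.
Variables (A : Type) (E red : relation A).
Hypothesis E_equiv : equivalence A E.
Let E_refl : reflexive A E := equiv_refl _ _ E_equiv.
Let E_sym : symmetric A E := equiv_sym _ _ E_equiv.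
Let E_trans : transitive A E := equiv_trans _ _ E_equiv.

Hypothesis red_compat : forall x y z, E x y -> red y z -> red x z.

Definition joinable_modulo (u v : A) : Prop :=
  exists z z', E z z' /\ clos_refl_trans A red u z /\ clos_refl_trans A red v z'.

Lemma rt_compat x y z : E x y -> clos_refl_trans A red y z ->
  exists z', E z' z /\ clos_refl_trans A red x z'.
Proof.
  intros Exy Hyz. apply clos_rt_rt1n in Hyz. destruct Hyz as [|y1 z Hs Hr].
  - exists x. split; [exact Exy | apply rt_refl].
  - exists z. split; [apply E_refl |].
    apply rt_trans with y1; [apply rt_step; eauto | now apply clos_rt1n_rt].
Qed.

Lemma joinable_modulo_sym u v : joinable_modulo u v -> joinable_modulo v u.
Proof.
  intros (z & z' & Ez & Hu & Hv). exists z', z.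
  repeat split; [apply E_sym | |]; assumption.
Qed.

Lemma joinable_modulo_compat u u' v v' :
  E u u' -> E v v' -> joinable_modulo u' v' -> joinable_modulo u v.
Proof.
  intros Eu Ev (z & z' & Ez & Hu & Hv).
  destruct (rt_compat Eu Hu) as (c & Ec & Hc).
  destruct (rt_compat Ev Hv) as (d & Ed & Hd).
  exists c, d. repeat split; [| assumption | assumption].
  apply E_trans with z; [assumption |].
  apply E_trans with z'; [assumption |].
  now apply E_sym.
Qed.

Lemma E_joinable_modulo u v : E u v -> joinable_modulo u v.
Proof. intros Euv. exists u, v. repeat split; [assumption | apply rt_refl ..]. Qed.

Hypothesis red_local : forall w u v, red w u -> red w v -> joinable_modulo u v.

Lemma newman_modulo w : Acc (transp A red) w ->
  forall u v, clos_refl_trans A red w u -> clos_refl_trans A red w v -> joinable_modulo u v.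
Proof.
  induction 1 as [w _ IH]. intros u v Hu Hv.
  apply clos_rt_rt1n in Hu. apply clos_rt_rt1n in Hv.
  destruct Hu as [|u1 u Su Hu].
  { exists v, v. repeat split; [apply E_refl | now apply clos_rt1n_rt | apply rt_refl]. }
  destruct Hv as [|v1 v Sv Hv].
  { exists u, u. repeat split; [apply E_refl | apply rt_refl |].
    apply rt_trans with u1; [now apply rt_step | now apply clos_rt1n_rt]. }
  apply clos_rt1n_rt in Hu. apply clos_rt1n_rt in Hv.
  destruct (red_local Su Sv) as (a & b & Eab & Ha & Hb).
  destruct (IH u1 Su u a Hu Ha) as (c & c' & Ecc' & Huc & Hac').
  destruct (rt_compat (E_sym Eab) Hac') as (c'' & Ec'' & Hbc'').
  destruct (IH v1 Sv v c'' Hv (rt_trans _ _ _ _ _ Hb Hbc'')) as (d & d' & Edd' & Hvd & Hcd').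
  assert (Ecc'' : E c c'').
  { apply E_trans with c'; [assumption | now apply E_sym]. }
  destruct (rt_compat Ecc'' Hcd') as (e & Ee & Hce).
  exists e, d. repeat split.
  - apply E_trans with d'; [assumption | now apply E_sym].
  - now apply rt_trans with c.
  - assumption.
Qed.

End NewmanModulo.

Section Conjugacy.
Variable Sigma : Type.
Implicit Types a b l s p q u v w : word Sigma.

Lemma cconj_refl u : cconj u u.
Proof. exists [], u. now rewrite app_nil_r. Qed.

Lemma cconj_sym u v : cconj u v -> cconj v u.
Proof. intros (a & b & -> & ->). now exists b, a. Qed.

Lemma cconj_trans u v w : cconj u v -> cconj v w -> cconj u w.
Proof.
  intros (a & b & -> & Ev) (c & d & Ev' & ->). rewrite Ev' in Ev.
  destruct (app_eq_app _ _ _ _ Ev) as (m & [[-> ->] | [-> ->]]).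
  - exists m, (d ++ b). now rewrite !app_assoc.
  - exists (a ++ c), m. now rewrite !app_assoc.
Qed.

Lemma cconj_equivalence : equivalence (word Sigma) (@cconj Sigma).
Proof. split; [exact cconj_refl | exact cconj_trans | exact cconj_sym]. Qed.

Lemma cconj_swap u v : cconj (u ++ v) (v ++ u).
Proof. now exists u, v. Qed.

Lemma cconj_rot u v w : cconj (u ++ v ++ w) (v ++ w ++ u).
Proof. exists u, (v ++ w). now rewrite <- app_assoc. Qed.

Local Ltac solve_app :=
  repeat split; try discriminate;
  simpl; repeat (rewrite <- app_assoc || rewrite app_nil_r); reflexivity.

(* The two factors [l1], [l2] of two conjugate words either sit one inside a
   linear reading of the other word, or wrap around each other on the circle. *)
Lemma conj_factor_cases l1 s1 l2 s2 a b :
  l1 ++ s1 = a ++ b -> l2 ++ s2 = b ++ a ->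
  (exists p q, l1 ++ s1 = p ++ l2 ++ q /\ s2 = q ++ p) \/
  (exists p q, l2 ++ s2 = p ++ l1 ++ q /\ s1 = q ++ p) \/
  (exists k f, k <> [] /\ f <> [] /\ l1 = k ++ s2 ++ f /\ l2 = f ++ s1 ++ k).
Proof.
  intros E1 E2. destruct (app_eq_app _ _ _ _ E1) as (f & [[-> ->] | [-> ->]]).
  - rewrite <- app_assoc in E2.
    destruct (app_eq_app _ _ _ _ E2) as (h & [[-> E3] | [-> ->]]).
    + destruct (app_eq_app _ _ _ _ E3) as (k & [[-> ->] | [-> ->]]).
      * left. exists a, k. solve_app.
      * destruct k as [|c k]; [|destruct f as [|d f]].
        -- left. exists s2, []. solve_app.
        -- right; left. exists s1, []. solve_app.
        -- right; right. exists (c :: k), (d :: f). solve_app.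
    + left. exists a, (h ++ s1). solve_app.
  - destruct (app_eq_app _ _ _ _ E2) as (c & [[-> E3] | [-> ->]]).
    + destruct (app_eq_app _ _ _ _ E3) as (d & [[-> ->] | [-> ->]]).
      * right; left. exists b, f. solve_app.
      * right; left. exists b, (d ++ s2). solve_app.
    + left. exists (l1 ++ f), c. solve_app.
Qed.

End Conjugacy.

Section CyclicRewriting.
Variables (Sigma : Type) (R : rws Sigma).
Implicit Types l r s p q u v w : word Sigma.

Local Notation cjoinable := (joinable_modulo (@cconj Sigma) (cstep R)).

Lemma step_app p l r q : R l r -> step R (p ++ l ++ q) (p ++ r ++ q).
Proof. intros Hlr. now exists p, q, l, r. Qed.

Lemma cstep_cconj_compat u v w : cconj u v -> cstep R v w -> cstep R u w.
Proof.
  intros Euv (v' & Evv' & Hs). exists v'. split; [now apply cconj_trans with v | exact Hs].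
Qed.

Lemma rewrites_crewrites u v : rewrites R u v -> crewrites R u v.
Proof.
  induction 1 as [x y Hxy | x | x y z _ IHxy _ IHyz].
  - apply rt_step. exists x. split; [apply cconj_refl | exact Hxy].
  - apply rt_refl.
  - now apply rt_trans with y.
Qed.

Lemma cjoinable_cconj_compat u u' v v' :
  cconj u u' -> cconj v v' -> cjoinable u' v' -> cjoinable u v.
Proof. apply joinable_modulo_compat; [apply cconj_equivalence | apply cstep_cconj_compat]. Qed.

Hypothesis R_confluent : confluent R.

Lemma cjoinable_nested_redexes l1 r1 l2 r2 s p q :
  R l1 r1 -> R l2 r2 -> l1 ++ s = p ++ l2 ++ q -> cjoinable (r1 ++ s) (r2 ++ q ++ p).
Proof.
  intros H1 H2 Es.
  assert (S1 : step R (l1 ++ s) (r1 ++ s)) by exact (step_app [] s H1).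
  assert (S2 : step R (l1 ++ s) (p ++ r2 ++ q)) by (rewrite Es; exact (step_app p q H2)).
  destruct (R_confluent (rt_step _ _ _ _ S1) (rt_step _ _ _ _ S2)) as (z & Hz1 & Hz2).
  apply (cjoinable_cconj_compat (cconj_refl _) (cconj_sym (cconj_rot p r2 q))).
  exists z, z. repeat split; [apply cconj_refl | now apply rewrites_crewrites ..].
Qed.

Hypothesis R_no_overlap :
  forall l1 r1 l2 r2, R l1 r1 -> R l2 r2 -> ~ cyclical_overlap l1 r1 l2 r2.
Hypothesis R_no_inclusion :
  forall l1 r1 l2 r2, R l1 r1 -> R l2 r2 -> ~ cyclical_inclusion l1 r1 l2 r2.

Lemma cconj_wrapped_redexes l1 r1 l2 r2 s1 s2 k f :
  R l1 r1 -> R l2 r2 -> k <> [] -> f <> [] ->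
  l1 = k ++ s2 ++ f -> l2 = f ++ s1 ++ k -> cconj (r1 ++ s1) (r2 ++ s2).
Proof.
  intros H1 H2 Hk Hf -> ->. apply NNPP. intro Hn.
  destruct s1 as [|c s1]; destruct s2 as [|d s2]; simpl in *; rewrite ?app_nil_r in Hn.
  - apply (R_no_inclusion H2 H1). left. split.
    + apply cconj_swap.
    + intro Hc. now apply Hn, cconj_sym.
  - apply (R_no_inclusion H1 H2). right.
    exists (d :: s2 ++ f ++ k), (d :: s2). repeat split; try discriminate.
    + rewrite app_assoc. apply cconj_swap.
    + intro Hc. apply Hn.
      apply cconj_trans with ((d :: s2) ++ r2); [exact Hc | exact (cconj_swap (_ :: _) _)].
  - apply (R_no_inclusion H2 H1). right.
    exists (c :: s1 ++ k ++ f), (c :: s1). repeat split; try discriminate.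
    + rewrite app_assoc. apply cconj_swap.
    + intro Hc. apply Hn, cconj_sym.
      apply cconj_trans with ((c :: s1) ++ r1); [exact Hc | exact (cconj_swap (_ :: _) _)].
  - apply (R_no_overlap H1 H2).
    exists k, (d :: s2), f, (c :: s1). repeat split; try discriminate; assumption.
Qed.

Lemma cjoinable_conj_redexes l1 r1 l2 r2 s1 s2 :
  R l1 r1 -> R l2 r2 -> cconj (l1 ++ s1) (l2 ++ s2) -> cjoinable (r1 ++ s1) (r2 ++ s2).
Proof.
  intros H1 H2 (a & b & E1 & E2).
  destruct (conj_factor_cases E1 E2)
    as [(p & q & Es & ->) | [(p & q & Es & ->) | (k & f & Hk & Hf & El1 & El2)]].
  - exact (cjoinable_nested_redexes H1 H2 Es).
  - apply (joinable_modulo_sym (cconj_equivalence Sigma)).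
    exact (cjoinable_nested_redexes H2 H1 Es).
  - apply E_joinable_modulo. exact (cconj_wrapped_redexes H1 H2 Hk Hf El1 El2).
Qed.

Lemma cstep_local_cjoinable w u v : cstep R w u -> cstep R w v -> cjoinable u v.
Proof.
  intros (w1 & C1 & (p1 & q1 & l1 & r1 & H1 & -> & ->))
         (w2 & C2 & (p2 & q2 & l2 & r2 & H2 & -> & ->)).
  apply (cjoinable_cconj_compat (cconj_rot p1 r1 q1) (cconj_rot p2 r2 q2)).
  apply (cjoinable_conj_redexes H1 H2).
  apply cconj_trans with (p1 ++ l1 ++ q1); [apply cconj_sym, cconj_rot |].
  apply cconj_trans with w; [now apply cconj_sym |].
  now apply cconj_trans with (p2 ++ l2 ++ q2); [| apply cconj_rot].
Qed.

End CyclicRewriting.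

Theorem theorem5p9 (Sigma : Type) (R : rws Sigma) :
  complete R -> cyclically_terminating R ->
  (forall l1 r1 l2 r2, R l1 r1 -> R l2 r2 -> ~ cyclical_overlap l1 r1 l2 r2) ->
  (forall l1 r1 l2 r2, R l1 r1 -> R l2 r2 -> ~ cyclical_inclusion l1 r1 l2 r2) ->
  cyclically_confluent R.
Proof.
  intros [_ Hconf] Hterm Hov Hinc w.
  apply newman_modulo.
  - apply cconj_equivalence.
  - apply cstep_cconj_compat.
  - exact (cstep_local_cjoinable Hconf Hov Hinc).
  - exact (no_infinite_chain_Acc Hterm w).
Qed.
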